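(* Let $X$ be a Polish space and let $\delta_1,\delta_2,\delta_3$ be regular derivations on the closed subsets of $X$ such that $\delta_1(P)\subseteq\delta_2(P)\cup\delta_3(P)$ for every closed set $P$. Then for every countable ordinal $\alpha$ and every closed set $P$, $\delta_1^{\omega^\alpha}(P)\subseteq\delta_2^{\omega^\alpha}(P)\cup\delta_3^{\omega^\alpha}(P)$.
   Context: A derivation is a map $\delta$ from the closed subsets of $X$ to closed subsets with $\delta(P)\subseteq P$; iterates: $\delta^0(P)=P$, $\delta^{\alpha+1}(P)=\delta(\delta^\alpha(P))$, $\delta^\alpha(P)=\bigcap_{\alpha'<\alpha}\delta^{\alpha'}(P)$ for limit $\alpha$. A derivation is regular if (a) $P\subseteq Q$ implies $\delta(P)\subseteq\delta(Q)$, and (b) $\delta(P\cup Q)\subseteq\delta(P)\cup\delta(Q)$, for all closed $P,Q$. *)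

From Stdlib Require Import Reals Classical FunctionalExtensionality PropExtensionality.
Set Implicit Arguments.
Open Scope R_scope.

Record topology (X : Type) := {
  is_open : (X -> Prop) -> Prop;
  open_full : is_open (fun _ => True);
  open_inter : forall U V, is_open U -> is_open V -> is_open (fun x => U x /\ V x);
  open_union : forall (I : Type) (F : I -> X -> Prop),
      (forall i, is_open (F i)) -> is_open (fun x => exists i, F i x)
}.

Definition is_closed (X : Type) (T : topology X) (P : X -> Prop) : Prop :=
  is_open T (fun x => ~ P x).

Definition is_metric (X : Type) (d : X -> X -> R) : Prop :=
  (forall x y, 0 <= d x y) /\ (forall x y, d x y = 0 <-> x = y) /\
  (forall x y, d x y = d y x) /\ (forall x y z, d x z <= d x y + d y z).

Definition metric_open (X : Type) (d : X -> X -> R) (U : X -> Prop) : Prop :=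
  forall x, U x -> exists eps, 0 < eps /\ forall y, d x y < eps -> U y.

Definition metric_cauchy (X : Type) (d : X -> X -> R) (u : nat -> X) : Prop :=
  forall eps, 0 < eps -> exists N, forall m n, (N <= m)%nat -> (N <= n)%nat -> d (u m) (u n) < eps.

Definition metric_converges (X : Type) (d : X -> X -> R) (u : nat -> X) (l : X) : Prop :=
  forall eps, 0 < eps -> exists N, forall n, (N <= n)%nat -> d (u n) l < eps.

Definition metric_complete (X : Type) (d : X -> X -> R) : Prop :=
  forall u, metric_cauchy d u -> exists l, metric_converges d u l.

(* a countable dense subset, enumerated by a partial sequence (allows X empty) *)
Definition metric_separable (X : Type) (d : X -> X -> R) : Prop :=
  exists s : nat -> option X,
    forall x eps, 0 < eps -> exists n y, s n = Some y /\ d x y < eps.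

Definition polish (X : Type) (T : topology X) : Prop :=
  exists d : X -> X -> R,
    is_metric d /\ metric_complete d /\ metric_separable d /\
    (forall U, is_open T U <-> metric_open d U).

Definition cset (X : Type) (T : topology X) := { P : X -> Prop | is_closed T P }.

Definition cs_mem (X : Type) (T : topology X) (P : cset T) (x : X) : Prop :=
  proj1_sig P x.

Definition cs_subset (X : Type) (T : topology X) (P Q : cset T) : Prop :=
  forall x, cs_mem P x -> cs_mem Q x.

Lemma closed_union (X : Type) (T : topology X) (P Q : X -> Prop) :
  is_closed T P -> is_closed T Q -> is_closed T (fun x => P x \/ Q x).
Proof.
  unfold is_closed; intros HP HQ.
  replace (fun x => ~ (P x \/ Q x)) with (fun x => ~ P x /\ ~ Q x).
  - now apply open_inter.
  - apply functional_extensionality; intro x; apply propositional_extensionality; tauto.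
Qed.

Lemma closed_bigcap (X : Type) (T : topology X) (F : nat -> X -> Prop) :
  (forall n, is_closed T (F n)) -> is_closed T (fun x => forall n, F n x).
Proof.
  unfold is_closed; intros HF.
  replace (fun x => ~ (forall n, F n x)) with (fun x => exists n, ~ F n x).
  - now apply open_union.
  - apply functional_extensionality; intro x; apply propositional_extensionality.
    split.
    + intros [n Hn] H; exact (Hn (H n)).
    + intro H; apply not_all_ex_not; exact H.
Qed.

Definition cs_union (X : Type) (T : topology X) (P Q : cset T) : cset T :=
  exist _ (fun x => cs_mem P x \/ cs_mem Q x)
        (@closed_union X T _ _ (proj2_sig P) (proj2_sig Q)).

Definition cs_bigcap (X : Type) (T : topology X) (F : nat -> cset T) : cset T :=
  exist _ (fun x => forall n, cs_mem (F n) x)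
        (@closed_bigcap X T _ (fun n => proj2_sig (F n))).

Definition is_derivation (X : Type) (T : topology X)
  (delta : cset T -> cset T) : Prop :=
  forall P, cs_subset (delta P) P.

Definition is_regular_derivation (X : Type) (T : topology X)
  (delta : cset T -> cset T) : Prop :=
  is_derivation delta /\
  (forall P Q, cs_subset P Q -> cs_subset (delta P) (delta Q)) /\
  (forall P Q x, cs_mem (delta (cs_union P Q)) x -> cs_mem (delta P) x \/ cs_mem (delta Q) x).

(* ---------- Countable ordinals as Brouwer trees ----------
   OL f denotes the supremum of the ordinals denoted by the f n. *)
Inductive ord : Type :=
| OZ : ord
| OS : ord -> ord
| OL : (nat -> ord) -> ord.

Fixpoint ord_of_nat (n : nat) : ord :=
  match n with O => OZ | S k => OS (ord_of_nat k) end.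

Definition omega : ord := OL ord_of_nat.

Fixpoint oadd (a b : ord) : ord :=
  match b with
  | OZ => a
  | OS c => OS (oadd a c)
  | OL f => OL (fun n => oadd a (f n))
  end.

Fixpoint omul (a b : ord) : ord :=
  match b with
  | OZ => OZ
  | OS c => oadd (omul a c) a
  | OL f => OL (fun n => omul a (f n))
  end.

Fixpoint opow_omega (a : ord) : ord :=
  match a with
  | OZ => OS OZ
  | OS c => omul (opow_omega c) omega
  | OL f => OL (fun n => opow_omega (f n))
  end.

(* transfinite iterates delta^a(P); at a limit node the intersection over the
   sequence (equal to the intersection over all smaller ordinals, since the
   iterates decrease for a derivation) *)
Fixpoint iter (X : Type) (T : topology X) (delta : cset T -> cset T)
  (a : ord) (P : cset T) : cset T :=
  match a with
  | OZ => P
  | OS b => delta (iter delta b P)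
  | OL f => cs_bigcap (fun n => iter delta (f n) P)
  end.

From Stdlib Require Import Reals Classical FunctionalExtensionality Lia.
Set Implicit Arguments.

(* The iterates of a monotone derivation decrease along a total order on
   Brouwer trees, so iterates along any two ordinals are comparable, uniformly in
   the derivation.  Hence a point lying, at each stage of a limit, in the
   delta2- or the delta3-iterate lies in one of them at every stage: the inclusion
   passes to limits, and iterates of a regular derivation preserve binary unions.
   At a successor, omega^(c+1) is the limit of the beta.n with beta = omega^c, and
   by induction on j + k, delta1^(beta(j+k))(P) is contained in
   delta2^(beta j)(P) U delta3^(beta k)(P): the last beta iterates of delta1 act on
   a subset of delta2^(beta(j+1))(P) U delta3^(beta(k+1))(P) U
   (delta2^(beta j)(P) n delta3^(beta k)(P)), and on the last piece the inclusion
   at beta applies. *)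

Inductive ole : ord -> ord -> Prop :=
| ole_OZ b : ole OZ b
| ole_OS a b : ole a b -> ole (OS a) (OS b)
| ole_OL f b : (forall n, ole (f n) b) -> ole (OL f) b
| ole_OL_r a g m : ole a (g m) -> ole a (OL g).

Lemma ole_total a b : ole a b \/ ole b a.
Proof.
  revert b; induction a as [|a IHa|f IHf]; intro b.
  - left; constructor.
  - induction b as [|b _|g IHg].
    + right; constructor.
    + destruct (IHa b); [left|right]; constructor; assumption.
    + destruct (classic (exists m, ole (OS a) (g m))) as [[m Hm]|Hnone].
      * left; exact (ole_OL_r g m Hm).
      * right; constructor; intro m.
        destruct (IHg m) as [Hle|Hge]; [exfalso; exact (Hnone (ex_intro _ m Hle))|exact Hge].
  - destruct (classic (forall n, ole (f n) b)) as [Hall|Hnot].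
    + left; constructor; exact Hall.
    + apply not_all_ex_not in Hnot as [n Hn].
      right; apply (ole_OL_r f n).
      destruct (IHf n b); [contradiction|assumption].
Qed.

Section Iterates.
Variables (X : Type) (T : topology X).

Definition cs_monotone (f : cset T -> cset T) : Prop :=
  forall P Q, cs_subset P Q -> cs_subset (f P) (f Q).

Lemma regular_derivation_mono (d : cset T -> cset T) : is_regular_derivation d -> cs_monotone d.
Proof. intros [_ [Hmono _]]; exact Hmono. Qed.

Definition cs_inter (A B : cset T) : cset T :=
  cs_bigcap (fun n => match n with O => A | S _ => B end).

Lemma cs_mem_inter A B x : cs_mem (cs_inter A B) x <-> cs_mem A x /\ cs_mem B x.
Proof.
  split.
  - intro H; exact (conj (H O) (H 1%nat)).
  - intros [HA HB] [|n]; assumption.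
Qed.

Lemma iter_oadd (d : cset T -> cset T) a b P : iter d (oadd a b) P = iter d b (iter d a P).
Proof.
  induction b as [|b IH|f IH]; simpl.
  - reflexivity.
  - now rewrite IH.
  - f_equal; apply functional_extensionality; intro n; apply IH.
Qed.

Lemma iter_omul_S (d : cset T -> cset T) b n P :
  iter d (omul b (ord_of_nat (S n))) P = iter d b (iter d (omul b (ord_of_nat n)) P).
Proof. exact (iter_oadd d _ b P). Qed.

Section Monotone.
Variable d : cset T -> cset T.
Hypothesis d_sub : is_derivation d.
Hypothesis d_mono : cs_monotone d.

Lemma iter_sub a : forall P, cs_subset (iter d a P) P.
Proof.
  induction a as [|a IH|f IH]; intros P x Hx.
  - exact Hx.
  - exact (IH P x (d_sub _ x Hx)).
  - exact (IH O P x (Hx O)).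
Qed.

Lemma iter_mono a : forall P Q, cs_subset P Q -> cs_subset (iter d a P) (iter d a Q).
Proof.
  induction a as [|a IH|f IH]; intros P Q HPQ x Hx.
  - exact (HPQ x Hx).
  - exact (d_mono (IH P Q HPQ) x Hx).
  - intro n; exact (IH n P Q HPQ x (Hx n)).
Qed.

Lemma ole_iter a b P : ole a b -> cs_subset (iter d b P) (iter d a P).
Proof.
  intro Hab; induction Hab as [b|a b _ IH|f b _ IH|a g m _ IH]; intros x Hx.
  - exact (iter_sub b P x Hx).
  - exact (d_mono IH x Hx).
  - intro n; exact (IH n x Hx).
  - exact (IH x (Hx m)).
Qed.

End Monotone.

Lemma iter_OL_or (d d' : cset T -> cset T) (Hd : is_derivation d) (Hd_mono : cs_monotone d)
  (Hd' : is_derivation d') (Hd'_mono : cs_monotone d') g P P' x :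
  (forall n, cs_mem (iter d (g n) P) x \/ cs_mem (iter d' (g n) P') x) ->
  cs_mem (iter d (OL g) P) x \/ cs_mem (iter d' (OL g) P') x.
Proof.
  intro Hor.
  destruct (classic (forall n, cs_mem (iter d (g n) P) x)) as [Hall|Hnot].
  - left; exact Hall.
  - apply not_all_ex_not in Hnot as [n0 Hn0].
    right; intro m.
    destruct (ole_total (g n0) (g m)) as [Hle|Hge].
    + destruct (Hor m) as [H|H]; [|exact H].
      exfalso; exact (Hn0 (ole_iter Hd Hd_mono P Hle x H)).
    + destruct (Hor n0) as [H|H]; [contradiction|].
      exact (ole_iter Hd' Hd'_mono P' Hge x H).
Qed.

Lemma iter_union (d : cset T -> cset T) (Hd : is_regular_derivation d) a : forall A B x,
  cs_mem (iter d a (cs_union A B)) x -> cs_mem (iter d a A) x \/ cs_mem (iter d a B) x.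
Proof.
  destruct Hd as [Hsub [Hmono Hunion]].
  induction a as [|a IH|f IH]; intros A B x Hx.
  - exact Hx.
  - apply Hunion.
    exact (Hmono _ (cs_union (iter d a A) (iter d a B)) (fun y => IH A B y) x Hx).
  - apply (iter_OL_or Hsub Hmono Hsub Hmono); intro n; exact (IH n A B x (Hx n)).
Qed.

Section Covering.
Variables d1 d2 d3 : cset T -> cset T.
Hypotheses (H1 : is_regular_derivation d1) (H2 : is_regular_derivation d2)
  (H3 : is_regular_derivation d3).

Definition iter_covered (a : ord) : Prop :=
  forall P x, cs_mem (iter d1 a P) x -> cs_mem (iter d2 a P) x \/ cs_mem (iter d3 a P) x.

Lemma iter_covered_OL g : (forall n, iter_covered (g n)) -> iter_covered (OL g).
Proof.
  intros Hg P x Hx.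
  apply (iter_OL_or (proj1 H2) (regular_derivation_mono H2)
                    (proj1 H3) (regular_derivation_mono H3)).
  intro n; exact (Hg n P x (Hx n)).
Qed.

Lemma iter_covered_step b (Hb : iter_covered b) (Q A B : cset T) :
  (forall y, cs_mem Q y -> cs_mem A y \/ cs_mem (iter d3 b B) y) ->
  (forall y, cs_mem Q y -> cs_mem (iter d2 b A) y \/ cs_mem B y) ->
  forall x, cs_mem (iter d1 b Q) x -> cs_mem (iter d2 b A) x \/ cs_mem (iter d3 b B) x.
Proof.
  intros HQA HQB x Hx.
  set (A2 := iter d2 b A); set (B3 := iter d3 b B).
  assert (HQ : cs_subset Q (cs_union A2 (cs_union B3 (cs_inter A B)))).
  { intros y Hy.
    destruct (HQA y Hy) as [HA|HB3]; [|right; left; exact HB3].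
    destruct (HQB y Hy) as [HA2|HB]; [left; exact HA2|].
    right; right; apply cs_mem_inter; split; assumption. }
  pose proof (iter_mono (regular_derivation_mono H1) b HQ x Hx) as HxQ.
  destruct (iter_union H1 b _ _ x HxQ) as [HA2|HxQ'].
  { left; exact (iter_sub (proj1 H1) b A2 x HA2). }
  destruct (iter_union H1 b _ _ x HxQ') as [HB3|HAB].
  { right; exact (iter_sub (proj1 H1) b B3 x HB3). }
  destruct (Hb _ x HAB) as [HAB2|HAB3]; [left|right].
  - refine (iter_mono (regular_derivation_mono H2) b _ x HAB2).
    intros y Hy; exact (proj1 (proj1 (cs_mem_inter A B y) Hy)).
  - refine (iter_mono (regular_derivation_mono H3) b _ x HAB3).
    intros y Hy; exact (proj2 (proj1 (cs_mem_inter A B y) Hy)).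
Qed.

Lemma iter_covered_omul_nat b (Hb : iter_covered b) j k P x :
  cs_mem (iter d1 (omul b (ord_of_nat (j + k))) P) x ->
  cs_mem (iter d2 (omul b (ord_of_nat j)) P) x \/
  cs_mem (iter d3 (omul b (ord_of_nat k)) P) x.
Proof.
  revert k P x; induction j as [|j IHj]; intros k P x Hx.
  - left; exact (iter_sub (proj1 H1) _ P x Hx).
  - revert P x Hx; induction k as [|k IHk]; intros P x Hx.
    + right; exact (iter_sub (proj1 H1) _ P x Hx).
    + rewrite !iter_omul_S.
      apply (iter_covered_step Hb (iter d1 (omul b (ord_of_nat (S j + k))) P)).
      * intros y Hy; rewrite <- iter_omul_S; apply IHj.
        rewrite Nat.add_succ_r; exact Hy.
      * intros y Hy; rewrite <- iter_omul_S; exact (IHk P y Hy).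
      * rewrite <- iter_omul_S.
        replace (S (S j + k)) with (S j + S k)%nat by lia; exact Hx.
Qed.

Lemma iter_covered_omul_omega b : iter_covered b -> iter_covered (omul b omega).
Proof.
  intros Hb P x Hx.
  apply (iter_OL_or (proj1 H2) (regular_derivation_mono H2)
                    (proj1 H3) (regular_derivation_mono H3)
                    (fun n => omul b (ord_of_nat n)) P P x).
  intro n; exact (iter_covered_omul_nat Hb n n P x (Hx (n + n)%nat)).
Qed.

End Covering.
End Iterates.

Unset Implicit Arguments.

Theorem proposition4p2 (X : Type) (T : topology X) (HX : polish T)
  (d1 d2 d3 : cset T -> cset T)
  (H1 : is_regular_derivation d1) (H2 : is_regular_derivation d2)
  (H3 : is_regular_derivation d3)
  (H123 : forall (P : cset T) (x : X),
      cs_mem (d1 P) x -> cs_mem (d2 P) x \/ cs_mem (d3 P) x) :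
  forall (a : ord) (P : cset T) (x : X),
    cs_mem (iter d1 (opow_omega a) P) x ->
    cs_mem (iter d2 (opow_omega a) P) x \/ cs_mem (iter d3 (opow_omega a) P) x.
Proof.
  intro a; change (iter_covered d1 d2 d3 (opow_omega a)).
  induction a as [|c IH|f IH].
  - exact H123.
  - exact (iter_covered_omul_omega H1 H2 H3 IH).
  - exact (iter_covered_OL H2 H3 IH).
Qed.
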